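(* Let $\mu\in\mathbb{R}$ and $\alpha>0$, and define $\gamma_{\mu,\alpha}:(-\infty,-2|\mu|]\cup[2|\mu|,\infty)\to\mathbb{R}$ by letting $\gamma_{\mu,\alpha}(y)$ be the unique $x\in\mathbb{R}$ with $x=\mu\log|x+iy|-\log\alpha$. Then: (i) $\gamma_{\mu,\alpha}$ is continuously differentiable; (ii) if $\mu>0$ then $\gamma_{\mu,\alpha}(y)\to\infty$ as $|y|\to\infty$; if $\mu<0$ then $\gamma_{\mu,\alpha}(y)\to-\infty$ as $|y|\to\infty$; if $\mu=0$ then $\gamma_{\mu,\alpha}\equiv-\log\alpha$; (iii) $|\gamma_{\mu,\alpha}'(y)|\le2|\mu|/|y|$; in particular $\gamma_{\mu,\alpha}'(y)\to0$ as $|y|\to\infty$ uniformly in $\alpha$; (iv) for $\alpha>\beta>0$ and all $y$ in the domain, $$\tfrac23\log\tfrac{\alpha}{\beta}\le\gamma_{\mu,\beta}(y)-\gamma_{\mu,\alpha}(y)\le2\log\tfrac{\alpha}{\beta},\qquad \lim_{|y|\to\infty}(\gamma_{\mu,\beta}(y)-\gamma_{\mu,\alpha}(y))=\log\tfrac{\alpha}{\beta}.$$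
   Context: For $|y|\ge2|\mu|$ there is indeed a unique $x$ with $x=\mu\log|x+iy|-\log\alpha$. *)

From Stdlib Require Import Reals Lra ClassicalEpsilon.
Open Scope R_scope.

Definition gdom (mu y : R) : Prop := 2 * Rabs mu <= Rabs y.

(* gamma_{mu,alpha}(y): the (unique, on gdom mu) x with
   x = mu * log |x + i y| - log alpha, where |x + i y| = sqrt (x^2 + y^2).
   Chosen by Hilbert's epsilon; off the domain the value is irrelevant. *)
Definition gamma (mu alpha y : R) : R :=
  epsilon (inhabits 0) (fun x => x = mu * ln (sqrt (x ^ 2 + y ^ 2)) - ln alpha).

Definition has_derivative_within (f : R -> R) (D : R -> Prop) (x l : R) : Prop :=
  forall eps, 0 < eps -> exists delta, 0 < delta /\
    forall z, D z -> z <> x -> Rabs (z - x) < delta ->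
      Rabs ((f z - f x) / (z - x) - l) < eps.

Definition continuous_on (g : R -> R) (D : R -> Prop) : Prop :=
  forall y, D y -> forall eps, 0 < eps -> exists delta, 0 < delta /\
    forall z, D z -> Rabs (z - y) < delta -> Rabs (g z - g y) < eps.

(* Write l(x, y) = ln |x + iy|.  Since |d_x l| <= 1 / (2|y|), on the domain x |-> mu l(x, y) - ln alpha
   is a 1/4-contraction, so gamma exists.  Subtracting the fixed-point equations at y and z and
   applying the mean value theorem in each variable gives
     gamma(z) - gamma(y) = mu d_y l(eta) / (1 - mu d_x l(xi)) * (z - y)
   with xi, eta intermediate points; hence gamma is 2/3-Lipschitz, its derivative is
   mu d_y l / (1 - mu d_x l) at (gamma(y), y), continuous, and bounded by 4|mu| / (3|y|).
   For two levels, gamma_beta - gamma_alpha - ln (alpha/beta) = mu (l(gamma_beta, y) - l(gamma_alpha, y))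
   is at most a quarter of gamma_beta - gamma_alpha and is O(1/|y|).  Finally l(x, y) >= ln |y|
   forces gamma to +oo or -oo according to the sign of mu. *)

From Stdlib Require Import Reals Lra Psatz ClassicalEpsilon.
From Coquelicot Require Import Coquelicot.
Open Scope R_scope.

Definition lnabs (x y : R) : R := ln (sqrt (x ^ 2 + y ^ 2)).

Definition lnabs_dx (x y : R) : R := x / (x ^ 2 + y ^ 2).

Lemma lnabs_sym x y : lnabs x y = lnabs y x.
Proof. unfold lnabs. f_equal. f_equal. ring. Qed.

Lemma lnabs_derive x y : 0 < x ^ 2 + y ^ 2 -> is_derive (fun t => lnabs t y) x (lnabs_dx x y).
Proof.
  intro Hpos. unfold lnabs, lnabs_dx. auto_derive.
  - split; [lra|]. split; [|exact I]. apply sqrt_lt_R0; lra.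
  - replace (x * (x * 1) + y * (y * 1)) with (x ^ 2 + y ^ 2) by ring.
    assert (Hs : 0 < sqrt (x ^ 2 + y ^ 2)) by (apply sqrt_lt_R0; lra).
    rewrite <- (sqrt_sqrt (x ^ 2 + y ^ 2)) at 3 by lra.
    field. lra.
Qed.

Lemma lnabs_mvt a b y :
  (forall t, Rmin a b <= t <= Rmax a b -> 0 < t ^ 2 + y ^ 2) ->
  exists t, Rmin a b <= t <= Rmax a b /\ lnabs b y - lnabs a y = lnabs_dx t y * (b - a).
Proof.
  intro Hpos. apply (MVT_gen (fun t => lnabs t y)).
  - intros t Ht. apply lnabs_derive, Hpos. lra.
  - intros t Ht. apply continuity_pt_filterlim, (ex_derive_continuous (fun t => lnabs t y)).
    eexists. apply lnabs_derive, Hpos, Ht.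
Qed.

Lemma lnabs_dx_le_half x y : y <> 0 -> Rabs (lnabs_dx x y) <= / (2 * Rabs y).
Proof.
  intro Hy. unfold lnabs_dx.
  assert (Hay : 0 < Rabs y) by (apply Rabs_pos_lt; exact Hy).
  assert (Hpos : 0 < x ^ 2 + y ^ 2) by (pose proof (pow2_gt_0 y Hy); nra).
  assert (Hamgm : 2 * Rabs x * Rabs y <= x ^ 2 + y ^ 2).
  { rewrite <- (pow2_abs x), <- (pow2_abs y). pose proof (pow2_ge_0 (Rabs x - Rabs y)). lra. }
  rewrite Rabs_div, (Rabs_right (x ^ 2 + y ^ 2)) by lra.
  apply Rmult_le_reg_r with (2 * Rabs y * (x ^ 2 + y ^ 2)); [apply Rmult_lt_0_compat; lra|].
  field_simplify; lra.
Qed.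

Lemma lnabs_dx_le_inv x y : x <> 0 -> Rabs (lnabs_dx x y) <= / Rabs x.
Proof.
  intro Hx. unfold lnabs_dx.
  assert (Hax : 0 < Rabs x) by (apply Rabs_pos_lt; exact Hx).
  assert (Hle : Rabs x * Rabs x <= x ^ 2 + y ^ 2).
  { rewrite <- Rabs_mult, Rabs_right by nra. pose proof (pow2_ge_0 y). lra. }
  assert (Hpos : 0 < x ^ 2 + y ^ 2) by nra.
  rewrite Rabs_div, (Rabs_right (x ^ 2 + y ^ 2)) by lra.
  apply Rmult_le_reg_r with (Rabs x * (x ^ 2 + y ^ 2)); [apply Rmult_lt_0_compat; lra|].
  field_simplify; lra.
Qed.

Lemma lnabs_lipschitz y a b :
  y <> 0 -> Rabs (lnabs b y - lnabs a y) <= Rabs (b - a) / (2 * Rabs y).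
Proof.
  intro Hy.
  destruct (lnabs_mvt a b y) as [t [_ Ht]].
  { intros t _. pose proof (pow2_ge_0 t). pose proof (pow2_gt_0 y Hy). lra. }
  rewrite Ht, Rabs_mult, Rmult_comm. unfold Rdiv.
  apply Rmult_le_compat_l; [apply Rabs_pos|]. apply lnabs_dx_le_half, Hy.
Qed.

Lemma lnabs_ge_ln_abs x y : y <> 0 -> ln (Rabs y) <= lnabs x y.
Proof.
  intro Hy. apply ln_le; [apply Rabs_pos_lt, Hy|].
  apply Rle_trans with (Rmax (Rabs x) (Rabs y)); [apply Rmax_r|apply sqrt_plus_sqr].
Qed.

Lemma lipschitz_fixed_point (g : R -> R) k :
  0 <= k < 1 -> (forall a b, Rabs (g b - g a) <= k * Rabs (b - a)) -> exists x, g x = x.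
Proof.
  intros Hk Hg.
  set (h := fun x => x - g x).
  assert (Hh : continuity h).
  { intro x. apply continuity_pt_minus; [apply continuity_pt_id|].
    intros eps Heps. exists (eps / (k + 1)). split; [apply Rdiv_lt_0_compat; lra|].
    intros z [_ Hz]. simpl in *. unfold R_dist in *.
    apply Rle_lt_trans with (k * Rabs (z - x)); [apply Hg|].
    apply Rle_lt_trans with (k * (eps / (k + 1))); [apply Rmult_le_compat_l; lra|].
    apply Rmult_lt_reg_r with (k + 1); [lra|]. field_simplify; lra. }
  assert (Hsep : forall t, 0 < t -> h 0 + (1 - k) * t <= h t /\ h (- t) <= h 0 - (1 - k) * t).
  { intros t Ht. unfold h.
    pose proof (Hg 0 t) as H1. pose proof (Hg 0 (- t)) as H2.
    rewrite Rminus_0_r, (Rabs_right t) in H1 by lra.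
    rewrite Rminus_0_r, Rabs_Ropp, (Rabs_right t) in H2 by lra.
    apply Rabs_le_between in H1, H2. lra. }
  set (b := Rabs (h 0) / (1 - k) + 1).
  assert (Hb : Rabs (h 0) < (1 - k) * b).
  { unfold b. rewrite Rmult_plus_distr_l. field_simplify; lra. }
  assert (Hb0 : 0 < b) by (pose proof (Rabs_pos (h 0)); nra).
  destruct (Hsep b Hb0) as [Hpos Hneg].
  destruct (IVT h (- b) b Hh) as [x [_ Hx]]; [lra|..].
  - pose proof (Rle_abs (h 0)). lra.
  - pose proof (Rle_abs (- h 0)). rewrite Rabs_Ropp in *. lra.
  - exists x. unfold h in Hx. lra.
Qed.

Lemma gdom_neq0 mu y : mu <> 0 -> gdom mu y -> y <> 0.
Proof.
  unfold gdom. intros Hmu Hy ->. rewrite Rabs_R0 in Hy.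
  pose proof (Rabs_pos_lt mu Hmu). lra.
Qed.

Lemma gdom_mu_lnabs_dx_le_quarter mu x y : gdom mu y -> Rabs (mu * lnabs_dx x y) <= / 4.
Proof.
  intro Hy. destruct (Req_dec mu 0) as [->|Hmu].
  - rewrite Rmult_0_l, Rabs_R0. lra.
  - pose proof (gdom_neq0 mu y Hmu Hy) as Hy0. pose proof (Rabs_pos_lt y Hy0).
    unfold gdom in Hy. rewrite Rabs_mult.
    apply Rle_trans with (Rabs mu * / (2 * Rabs y)).
    + apply Rmult_le_compat_l; [apply Rabs_pos|apply lnabs_dx_le_half, Hy0].
    + apply Rmult_le_reg_r with (4 * Rabs y); [lra|]. field_simplify; lra.
Qed.

Lemma gdom_mu_lnabs_dx_le_half mu x y : gdom mu x -> Rabs (mu * lnabs_dx x y) <= / 2.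
Proof.
  intro Hx. destruct (Req_dec mu 0) as [->|Hmu].
  - rewrite Rmult_0_l, Rabs_R0. lra.
  - pose proof (gdom_neq0 mu x Hmu Hx) as Hx0. pose proof (Rabs_pos_lt x Hx0).
    unfold gdom in Hx. rewrite Rabs_mult.
    apply Rle_trans with (Rabs mu * / Rabs x).
    + apply Rmult_le_compat_l; [apply Rabs_pos|apply lnabs_dx_le_inv, Hx0].
    + apply Rmult_le_reg_r with (2 * Rabs x); [lra|]. field_simplify; lra.
Qed.

Lemma gdom_contraction mu y a b :
  gdom mu y -> Rabs (mu * (lnabs b y - lnabs a y)) <= / 4 * Rabs (b - a).
Proof.
  intro Hy. destruct (Req_dec mu 0) as [->|Hmu].
  - rewrite Rmult_0_l, Rabs_R0. pose proof (Rabs_pos (b - a)). lra.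
  - pose proof (gdom_neq0 mu y Hmu Hy) as Hy0. pose proof (Rabs_pos_lt y Hy0).
    unfold gdom in Hy. rewrite Rabs_mult.
    apply Rle_trans with (Rabs mu * (Rabs (b - a) / (2 * Rabs y))).
    + apply Rmult_le_compat_l; [apply Rabs_pos|apply lnabs_lipschitz, Hy0].
    + pose proof (Rabs_pos (b - a)).
      apply Rmult_le_reg_r with (4 * Rabs y); [lra|]. field_simplify; nra.
Qed.

Lemma gamma_fixed_point mu alpha y :
  gdom mu y -> gamma mu alpha y = mu * lnabs (gamma mu alpha y) y - ln alpha.
Proof.
  intro Hy. unfold gamma.
  apply (epsilon_spec (inhabits 0) (fun x => x = mu * lnabs x y - ln alpha)).
  destruct (lipschitz_fixed_point (fun x => mu * lnabs x y - ln alpha) (/ 4)) as [x Hx];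
    [lra| |exists x; symmetry; exact Hx].
  intros a b. replace (mu * lnabs b y - ln alpha - (mu * lnabs a y - ln alpha))
    with (mu * (lnabs b y - lnabs a y)) by ring.
  apply gdom_contraction, Hy.
Qed.

Lemma ln_unbounded c M : 0 < c -> exists N, forall t, N < t -> M < c * ln t.
Proof.
  intro Hc. exists (exp (M / c)). intros t Ht.
  pose proof (exp_pos (M / c)).
  assert (HMc : M / c < ln t) by (rewrite <- (ln_exp (M / c)); apply ln_increasing; lra).
  apply Rmult_lt_compat_l with (r := c) in HMc; [|exact Hc].
  replace (c * (M / c)) with M in HMc by (field; lra). exact HMc.
Qed.

Lemma gamma_ge_of_mu_gt0 mu alpha y :
  0 < mu -> gdom mu y -> mu * ln (Rabs y) - ln alpha <= gamma mu alpha y.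
Proof.
  intros Hmu Hy. rewrite (gamma_fixed_point mu alpha y Hy).
  pose proof (lnabs_ge_ln_abs (gamma mu alpha y) y (gdom_neq0 mu y ltac:(lra) Hy)).
  apply Rplus_le_compat_r, Rmult_le_compat_l; lra.
Qed.

Lemma gamma_le_of_mu_lt0 mu alpha y :
  mu < 0 -> gdom mu y -> gamma mu alpha y <= mu * ln (Rabs y) - ln alpha.
Proof.
  intros Hmu Hy. rewrite (gamma_fixed_point mu alpha y Hy).
  pose proof (lnabs_ge_ln_abs (gamma mu alpha y) y (gdom_neq0 mu y ltac:(lra) Hy)).
  apply Rplus_le_compat_r, Rmult_le_compat_neg_l; lra.
Qed.

Lemma gamma_mu0 alpha y : gamma 0 alpha y = - ln alpha.
Proof.
  assert (Hy : gdom 0 y) by (unfold gdom; rewrite Rabs_R0; pose proof (Rabs_pos y); lra).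
  rewrite (gamma_fixed_point 0 alpha y Hy). ring.
Qed.

(* By symmetry, [lnabs_dx r s] is the y-derivative of [lnabs s y] at [y = r]. [slope] is the
   implicit-function quotient mu d_y / (1 - mu d_x) with its two partial derivatives taken at
   independent points, as the mean value theorem delivers them. *)
Definition slope mu p q r s : R := mu * lnabs_dx r s / (1 - mu * lnabs_dx p q).

Definition dgamma mu alpha y : R := slope mu (gamma mu alpha y) y y (gamma mu alpha y).

Lemma slope_bound mu p q r s :
  Rabs (mu * lnabs_dx p q) <= / 4 ->
  Rabs (slope mu p q r s) <= 4 / 3 * Rabs (mu * lnabs_dx r s).
Proof.
  intro Ha. unfold slope.
  assert (Hden : 3 / 4 <= 1 - mu * lnabs_dx p q) by (pose proof (Rle_abs (mu * lnabs_dx p q)); lra).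
  rewrite Rabs_div, (Rabs_right (1 - _)) by lra.
  pose proof (Rabs_pos (mu * lnabs_dx r s)).
  apply Rmult_le_reg_r with (1 - mu * lnabs_dx p q); [lra|]. field_simplify; nra.
Qed.

Lemma between_same_sign y z t :
  Rabs (z - y) < Rabs y -> Rmin y z <= t <= Rmax y z ->
  t <> 0 /\ Rmin (Rabs y) (Rabs z) <= Rabs t.
Proof.
  unfold Rmin, Rmax. intros Hzy Ht.
  destruct (Rle_dec y z), (Rle_dec (Rabs y) (Rabs z));
    unfold Rabs in *; repeat destruct Rcase_abs; split; lra.
Qed.

Lemma gamma_increment mu alpha y z :
  gdom mu y -> gdom mu z -> Rabs (z - y) < Rabs y ->
  exists xi eta,
    Rabs (xi - gamma mu alpha y) <= Rabs (gamma mu alpha z - gamma mu alpha y)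
    /\ Rabs (eta - y) <= Rabs (z - y) /\ gdom mu eta
    /\ gamma mu alpha z - gamma mu alpha y = slope mu xi z eta (gamma mu alpha y) * (z - y).
Proof.
  intros Hy Hz Hzy.
  set (x := gamma mu alpha y). set (x' := gamma mu alpha z).
  assert (Hz0 : z <> 0) by (intros ->; rewrite Rminus_0_l, Rabs_Ropp in Hzy; lra).
  destruct (lnabs_mvt x x' z) as [xi [Hxi Exi]].
  { intros t _. pose proof (pow2_ge_0 t). pose proof (pow2_gt_0 z Hz0). lra. }
  destruct (lnabs_mvt y z x) as [eta [Heta Eeta]].
  { intros t Ht. destruct (between_same_sign y z t Hzy Ht) as [Ht0 _].
    pose proof (pow2_gt_0 t Ht0). pose proof (pow2_ge_0 x). lra. }
  assert (Hgdom_eta : gdom mu eta).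
  { destruct (between_same_sign y z eta Hzy Heta) as [_ Hmin].
    unfold gdom in *. apply Rle_trans with (2 := Hmin), Rmin_glb; assumption. }
  assert (Hden : Rabs (mu * lnabs_dx xi z) <= / 4) by apply gdom_mu_lnabs_dx_le_quarter, Hz.
  assert (Hden0 : 1 - mu * lnabs_dx xi z <> 0) by (pose proof (Rle_abs (mu * lnabs_dx xi z)); lra).
  assert (Hincr : (x' - x) * (1 - mu * lnabs_dx xi z) = mu * lnabs_dx eta x * (z - y)).
  { pose proof (gamma_fixed_point mu alpha y Hy) as Ex.
    pose proof (gamma_fixed_point mu alpha z Hz) as Ex'. fold x x' in Ex, Ex'.
    replace ((x' - x) * (1 - mu * lnabs_dx xi z))
      with (x' - x - mu * (lnabs x' z - lnabs x z)) by (rewrite Exi; ring).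
    replace (mu * lnabs_dx eta x * (z - y)) with (mu * (lnabs z x - lnabs y x))
      by (rewrite Eeta; ring).
    rewrite <- (lnabs_sym x z), <- (lnabs_sym x y). lra. }
  exists xi, eta. split; [|split; [|split]].
  - rewrite Rmin_comm, Rmax_comm in Hxi. apply Rabs_le_between_min_max, Hxi.
  - rewrite Rmin_comm, Rmax_comm in Heta. apply Rabs_le_between_min_max, Heta.
  - exact Hgdom_eta.
  - unfold slope. apply Rmult_eq_reg_r with (1 - mu * lnabs_dx xi z); [|exact Hden0].
    rewrite Hincr. field. exact Hden0.
Qed.

Lemma gamma_lipschitz_near mu alpha y z :
  gdom mu y -> gdom mu z -> Rabs (z - y) < Rabs y ->
  Rabs (gamma mu alpha z - gamma mu alpha y) <= 2 / 3 * Rabs (z - y).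
Proof.
  intros Hy Hz Hzy.
  destruct (gamma_increment mu alpha y z Hy Hz Hzy) as [xi [eta [_ [_ [Heta ->]]]]].
  rewrite Rabs_mult. apply Rmult_le_compat_r; [apply Rabs_pos|].
  pose proof (slope_bound mu xi z eta (gamma mu alpha y) (gdom_mu_lnabs_dx_le_quarter mu xi z Hz)).
  pose proof (gdom_mu_lnabs_dx_le_half mu eta (gamma mu alpha y) Heta). lra.
Qed.

Lemma dgamma_bound mu alpha y :
  gdom mu y -> y <> 0 -> Rabs (dgamma mu alpha y) <= 2 * Rabs mu / Rabs y.
Proof.
  intros Hy Hy0. set (x := gamma mu alpha y).
  pose proof (slope_bound mu x y y x (gdom_mu_lnabs_dx_le_quarter mu x y Hy)) as Hs.
  assert (Hnum : Rabs (mu * lnabs_dx y x) <= Rabs mu / Rabs y).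
  { rewrite Rabs_mult. apply Rmult_le_compat_l; [apply Rabs_pos|apply lnabs_dx_le_inv, Hy0]. }
  assert (0 <= Rabs mu / Rabs y)
    by (apply Rdiv_le_0_compat; [apply Rabs_pos|apply Rabs_pos_lt, Hy0]).
  unfold dgamma. fold x. unfold Rdiv in *. lra.
Qed.

Lemma lnabs_dx_continuous p q :
  0 < p ^ 2 + q ^ 2 -> continuous (fun v : R * R => lnabs_dx (fst v) (snd v)) (p, q).
Proof.
  intro Hpos. unfold lnabs_dx, Rdiv.
  assert (Hsq : forall t : R, continuous (fun x : R => x ^ 2) t)
    by (intro t; apply continuity_pt_filterlim, derivable_continuous_pt, derivable_pt_pow).
  apply (continuous_mult (K := R_AbsRing) fst (fun v : R * R => / (fst v ^ 2 + snd v ^ 2))).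
  { apply continuous_fst. }
  apply (continuous_comp (fun v : R * R => fst v ^ 2 + snd v ^ 2) Rinv).
  2: { apply continuous_Rinv. simpl. lra. }
  apply (continuous_plus (V := R_NormedModule) (fun v : R * R => fst v ^ 2) (fun v : R * R => snd v ^ 2)).
  - apply (continuous_comp fst (fun x => x ^ 2)); [apply continuous_fst|apply Hsq].
  - apply (continuous_comp snd (fun x => x ^ 2)); [apply continuous_snd|apply Hsq].
Qed.

Lemma slope_continuous mu p q r s :
  0 < p ^ 2 + q ^ 2 -> 0 < r ^ 2 + s ^ 2 -> mu * lnabs_dx p q <> 1 ->
  continuous (fun w : (R * R) * (R * R) =>
    slope mu (fst (fst w)) (snd (fst w)) (fst (snd w)) (snd (snd w))) ((p, q), (r, s)).
Proof.
  intros Hpq Hrs Hden. unfold slope, Rdiv.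
  set (a := fun w : (R * R) * (R * R) => mu * lnabs_dx (fst (fst w)) (snd (fst w))).
  set (b := fun w : (R * R) * (R * R) => mu * lnabs_dx (fst (snd w)) (snd (snd w))).
  assert (Ha : continuous a ((p, q), (r, s))).
  { apply (continuous_mult (K := R_AbsRing) (fun _ => mu)); [apply continuous_const|].
    apply (continuous_comp fst (fun v : R * R => lnabs_dx (fst v) (snd v)));
      [apply continuous_fst|apply lnabs_dx_continuous, Hpq]. }
  assert (Hb : continuous b ((p, q), (r, s))).
  { apply (continuous_mult (K := R_AbsRing) (fun _ => mu)); [apply continuous_const|].
    apply (continuous_comp snd (fun v : R * R => lnabs_dx (fst v) (snd v)));
      [apply continuous_snd|apply lnabs_dx_continuous, Hrs]. }
  apply (continuous_mult (K := R_AbsRing) b (fun w => / (1 - a w))); [exact Hb|].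
  apply (continuous_comp (fun w => 1 - a w) Rinv).
  - apply (continuous_plus (V := R_NormedModule) (fun _ => 1) (fun w => - a w));
      [apply continuous_const|apply (continuous_opp (V := R_NormedModule)), Ha].
  - apply continuous_Rinv. unfold a. simpl. lra.
Qed.

Lemma continuous_near4 (h : (R * R) * (R * R) -> R) p q r s :
  continuous h ((p, q), (r, s)) -> forall eps, 0 < eps ->
  exists d, 0 < d /\ forall p' q' r' s',
    Rabs (p' - p) < d -> Rabs (q' - q) < d -> Rabs (r' - r) < d -> Rabs (s' - s) < d ->
    Rabs (h ((p', q'), (r', s')) - h ((p, q), (r, s))) < eps.
Proof.
  intros Hh eps Heps.
  destruct (proj1 (filterlim_locally h _) Hh (mkposreal eps Heps)) as [d Hd].
  exists d. split; [apply cond_pos|].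
  intros p' q' r' s' Hp Hq Hr Hs. apply (Hd ((p', q'), (r', s'))). repeat split; assumption.
Qed.

Lemma dgamma_mu0 alpha y : dgamma 0 alpha y = 0.
Proof. unfold dgamma, slope, Rdiv. ring. Qed.

Lemma slope_near_dgamma mu alpha y eps :
  gdom mu y -> y <> 0 -> 0 < eps ->
  exists delta, 0 < delta <= Rabs y /\ forall z p r s, gdom mu z -> Rabs (z - y) < delta ->
    Rabs (p - gamma mu alpha y) <= Rabs (gamma mu alpha z - gamma mu alpha y) ->
    Rabs (r - y) <= Rabs (z - y) ->
    Rabs (s - gamma mu alpha y) <= Rabs (gamma mu alpha z - gamma mu alpha y) ->
    Rabs (slope mu p z r s - dgamma mu alpha y) < eps.
Proof.
  intros Hy Hy0 Heps. set (x := gamma mu alpha y).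
  assert (Hxy : 0 < x ^ 2 + y ^ 2) by (pose proof (pow2_ge_0 x); pose proof (pow2_gt_0 y Hy0); lra).
  assert (Hden : mu * lnabs_dx x y <> 1).
  { pose proof (gdom_mu_lnabs_dx_le_quarter mu x y Hy). pose proof (Rle_abs (mu * lnabs_dx x y)). lra. }
  destruct (continuous_near4 _ x y y x
    (slope_continuous mu x y y x Hxy ltac:(lra) Hden) eps Heps) as [d [Hd Hnear]].
  pose proof (Rabs_pos_lt y Hy0).
  exists (Rmin d (Rabs y)). split; [split; [apply Rmin_pos; lra|apply Rmin_r]|].
  intros z p r s Hz Hzy Hp Hr Hs.
  pose proof (Rmin_l d (Rabs y)). pose proof (Rmin_r d (Rabs y)).
  pose proof (gamma_lipschitz_near mu alpha y z Hy Hz ltac:(lra)) as Hlip. fold x in Hlip, Hp, Hs.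
  pose proof (Rabs_pos (z - y)).
  apply (Hnear p z r s); lra.
Qed.

Lemma dgamma_is_derivative mu alpha y :
  gdom mu y -> has_derivative_within (gamma mu alpha) (gdom mu) y (dgamma mu alpha y).
Proof.
  intros Hy eps Heps. destruct (Req_dec mu 0) as [->|Hmu].
  - exists 1. split; [lra|]. intros z _ Hzy _.
    rewrite !gamma_mu0, dgamma_mu0, Rminus_diag, Rdiv_0_l, Rminus_0_r, Rabs_R0. exact Heps.
  - pose proof (gdom_neq0 mu y Hmu Hy) as Hy0.
    destruct (slope_near_dgamma mu alpha y eps Hy Hy0 Heps) as [delta [[Hdelta Hdy] Hnear]].
    exists delta. split; [exact Hdelta|]. intros z Hz Hzy Hlt.
    destruct (gamma_increment mu alpha y z Hy Hz ltac:(lra)) as [xi [eta [Hxi [Heta [_ ->]]]]].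
    replace (slope mu xi z eta (gamma mu alpha y) * (z - y) / (z - y))
      with (slope mu xi z eta (gamma mu alpha y)) by (field; lra).
    apply Hnear; try assumption.
    rewrite Rminus_diag, Rabs_R0. apply Rabs_pos.
Qed.

Lemma dgamma_continuous mu alpha : continuous_on (dgamma mu alpha) (gdom mu).
Proof.
  intros y Hy eps Heps. destruct (Req_dec mu 0) as [->|Hmu].
  - exists 1. split; [lra|]. intros z _ _.
    rewrite !dgamma_mu0, Rminus_diag, Rabs_R0. exact Heps.
  - pose proof (gdom_neq0 mu y Hmu Hy) as Hy0.
    destruct (slope_near_dgamma mu alpha y eps Hy Hy0 Heps) as [delta [[Hdelta _] Hnear]].
    exists delta. split; [exact Hdelta|]. intros z Hz Hzy.
    apply Hnear; try assumption; apply Rle_refl.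
Qed.

Lemma div_lt_of_div_lt c eps t : 0 <= c -> 0 < eps -> c / eps < t -> c / t < eps.
Proof.
  intros Hc Heps Ht.
  assert (0 <= c / eps) by (apply Rdiv_le_0_compat; lra).
  apply Rmult_lt_reg_r with t; [lra|]. unfold Rdiv. rewrite Rmult_assoc, Rinv_l by lra.
  apply Rmult_lt_compat_l with (r := eps) in Ht; [|exact Heps].
  replace (eps * (c / eps)) with c in Ht by (field; lra). lra.
Qed.

Lemma dgamma_uniformly_small mu eps :
  0 < eps -> exists N, forall alpha y, gdom mu y -> N < Rabs y -> Rabs (dgamma mu alpha y) < eps.
Proof.
  intro Heps. exists (2 * Rabs mu / eps). intros alpha y Hy HN.
  pose proof (Rabs_pos mu).
  assert (Hy0 : y <> 0).
  { intros ->. rewrite Rabs_R0 in HN.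
    assert (0 <= 2 * Rabs mu / eps) by (apply Rdiv_le_0_compat; lra). lra. }
  apply Rle_lt_trans with (1 := dgamma_bound mu alpha y Hy Hy0).
  apply div_lt_of_div_lt; lra.
Qed.

Lemma gamma_tends_pinfty mu alpha :
  0 < mu -> forall M, exists N, forall y, gdom mu y -> N < Rabs y -> M < gamma mu alpha y.
Proof.
  intros Hmu M. destruct (ln_unbounded mu (M + ln alpha) Hmu) as [N HN].
  exists N. intros y Hy Hlt. pose proof (HN _ Hlt). pose proof (gamma_ge_of_mu_gt0 mu alpha y Hmu Hy). lra.
Qed.

Lemma gamma_tends_minfty mu alpha :
  mu < 0 -> forall M, exists N, forall y, gdom mu y -> N < Rabs y -> gamma mu alpha y < M.
Proof.
  intros Hmu M. destruct (ln_unbounded (- mu) (- (M + ln alpha)) ltac:(lra)) as [N HN].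
  exists N. intros y Hy Hlt. pose proof (HN _ Hlt). pose proof (gamma_le_of_mu_lt0 mu alpha y Hmu Hy). lra.
Qed.

Lemma gamma_gap_eq mu alpha beta y :
  0 < alpha -> 0 < beta -> gdom mu y ->
  gamma mu beta y - gamma mu alpha y - ln (alpha / beta)
  = mu * (lnabs (gamma mu beta y) y - lnabs (gamma mu alpha y) y).
Proof.
  intros Ha Hb Hy. rewrite ln_div by assumption.
  rewrite (gamma_fixed_point mu alpha y Hy), (gamma_fixed_point mu beta y Hy) at 1. ring.
Qed.

Lemma ln_div_gt0 alpha beta : 0 < beta -> beta < alpha -> 0 < ln (alpha / beta).
Proof.
  intros Hb Hab. rewrite <- ln_1. apply ln_increasing; [lra|].
  apply Rmult_lt_reg_r with beta; [lra|]. field_simplify; lra.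
Qed.

Lemma gamma_gap_bounds mu alpha beta y :
  0 < beta -> beta < alpha -> gdom mu y ->
  4 / 5 * ln (alpha / beta) <= gamma mu beta y - gamma mu alpha y <= 4 / 3 * ln (alpha / beta).
Proof.
  intros Hb Hab Hy.
  pose proof (ln_div_gt0 alpha beta Hb Hab) as HL.
  pose proof (gdom_contraction mu y (gamma mu alpha y) (gamma mu beta y) Hy) as Hc.
  rewrite <- gamma_gap_eq in Hc by (auto; lra).
  apply Rabs_le_between in Hc.
  set (D := gamma mu beta y - gamma mu alpha y) in *.
  destruct (Rle_dec 0 D); [rewrite Rabs_right in Hc by lra|rewrite Rabs_left in Hc by lra]; lra.
Qed.

Lemma gamma_gap_tendsto mu alpha beta :
  0 < beta -> beta < alpha -> forall eps, 0 < eps -> exists N, forall y, gdom mu y -> N < Rabs y ->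
    Rabs (gamma mu beta y - gamma mu alpha y - ln (alpha / beta)) < eps.
Proof.
  intros Hb Hab eps Heps. set (L := ln (alpha / beta)).
  pose proof (Rabs_pos mu) as Hmu.
  exists (Rabs mu * L / eps). intros y Hy HN.
  destruct (gamma_gap_bounds mu alpha beta y Hb Hab Hy) as [Hlow Hupp]. fold L in Hlow, Hupp.
  assert (HL : 0 <= L) by lra.
  assert (Hy0 : 0 < Rabs y).
  { assert (0 <= Rabs mu * L / eps) by (apply Rdiv_le_0_compat; nra). lra. }
  assert (Hy0' : y <> 0) by (intros ->; rewrite Rabs_R0 in Hy0; lra).
  rewrite gamma_gap_eq, Rabs_mult by (auto; lra).
  eapply Rle_lt_trans.
  { apply Rmult_le_compat_l; [exact Hmu|apply lnabs_lipschitz, Hy0']. }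
  rewrite (Rabs_right (gamma mu beta y - gamma mu alpha y)) by lra.
  apply Rle_lt_trans with (Rabs mu * L / Rabs y); [|apply div_lt_of_div_lt; nra].
  unfold Rdiv. rewrite Rmult_assoc. apply Rmult_le_compat_l; [exact Hmu|].
  rewrite Rinv_mult, <- Rmult_assoc.
  apply Rmult_le_compat_r; [left; apply Rinv_0_lt_compat, Hy0|]. lra.
Qed.

Theorem lemma5p2 (mu : R) :
  (* (i) + (iii): a continuous derivative G' alpha of gamma_{mu,alpha} on the domain *)
  (exists G' : R -> R -> R,
     (forall alpha, 0 < alpha ->
        (forall y, gdom mu y -> has_derivative_within (gamma mu alpha) (gdom mu) y (G' alpha y))
        /\ continuous_on (G' alpha) (gdom mu)
        /\ (forall y, gdom mu y -> y <> 0 -> Rabs (G' alpha y) <= 2 * Rabs mu / Rabs y))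
     /\ (forall eps, 0 < eps -> exists N, forall alpha, 0 < alpha ->
           forall y, gdom mu y -> N < Rabs y -> Rabs (G' alpha y) < eps))
  (* (ii) *)
  /\ (forall alpha, 0 < alpha ->
        (0 < mu -> forall M, exists N, forall y, gdom mu y -> N < Rabs y ->
                     M < gamma mu alpha y)
        /\ (mu < 0 -> forall M, exists N, forall y, gdom mu y -> N < Rabs y ->
                     gamma mu alpha y < M)
        /\ (mu = 0 -> forall y, gdom mu y -> gamma mu alpha y = - ln alpha))
  (* (iv) *)
  /\ (forall alpha beta, 0 < beta -> beta < alpha ->
        (forall y, gdom mu y ->
           2 / 3 * ln (alpha / beta) <= gamma mu beta y - gamma mu alpha y
           /\ gamma mu beta y - gamma mu alpha y <= 2 * ln (alpha / beta))
        /\ (forall eps, 0 < eps -> exists N, forall y, gdom mu y -> N < Rabs y ->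
              Rabs (gamma mu beta y - gamma mu alpha y - ln (alpha / beta)) < eps)).
Proof.
  split; [|split].
  - exists (dgamma mu). split.
    + intros alpha _. split; [|split].
      * intros y Hy. apply dgamma_is_derivative, Hy.
      * apply dgamma_continuous.
      * intros y Hy Hy0. apply dgamma_bound; assumption.
    + intros eps Heps. destruct (dgamma_uniformly_small mu eps Heps) as [N HN].
      exists N. intros alpha _. apply HN.
  - intros alpha _. split; [|split].
    + apply gamma_tends_pinfty.
    + apply gamma_tends_minfty.
    + intros -> y _. apply gamma_mu0.
  - intros alpha beta Hb Hab. split.
    + intros y Hy. destruct (gamma_gap_bounds mu alpha beta y Hb Hab Hy).
      pose proof (ln_div_gt0 alpha beta Hb Hab). split; lra.
    + apply gamma_gap_tendsto; assumption.
Qed.
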